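(* Let $n\geq 2$. Let $SP^n(\mathbb{C})$ be the $n$-th symmetric power of $\mathbb{C}$ and $\Delta=\{\{z,\dots,z\}\mid z\in\mathbb{C}\}\subset SP^n(\mathbb{C})$ its diagonal, with $\mathbb{C}\rtimes\mathbb{C}^*$ acting on $SP^n(\mathbb{C})-\Delta$ by $z\mapsto\lambda z+\mu$ on each point. For $\mathbf{z}=\{z_1,\dots,z_n\}$ let $B(\mathbf{z})=(z_1+\dots+z_n)/n$ and let $a_0,\dots,a_{n-2}$ be the coefficients of $z^0,\dots,z^{n-2}$ in the monic polynomial $(z-z_1+B(\mathbf{z}))\cdots(z-z_n+B(\mathbf{z}))$. Then \[ \psi:\frac{SP^n(\mathbb{C})-\Delta}{\mathbb{C}\rtimes\mathbb{C}^*}\to\mathbb{P}(n,n-1,\dots,2),\qquad [\{z_1,\dots,z_n\}]\mapsto[a_0:\dots:a_{n-2}] \] is a well-defined homeomorphism.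
   Context: For positive integers $b_0,\dots,b_m$, the weighted projective space $\mathbb{P}(b_0,\dots,b_m)$ is $(\mathbb{C}^{m+1}-\{0\})/\sim$ where $(z_0,\dots,z_m)\sim(t^{b_0}z_0,\dots,t^{b_m}z_m)$ for $t\in\mathbb{C}^*$. Thus in $\mathbb{P}(n,n-1,\dots,2)$ the coordinate $a_k$ has weight $n-k$. *)

From HB Require Import structures.
From mathcomp Require Import all_boot all_order all_algebra perm.
From mathcomp Require Import generic_quotient.
From mathcomp Require Import complex.
From mathcomp Require Import all_classical all_reals all_analysis.
From mathcomp Require Import ring.
Import GRing.Theory Num.Theory numFieldTopology.Exports.

Set Implicit Arguments.
Unset Strict Implicit.
Unset Printing Implicit Defensive.

Local Open Scope ring_scope.
Local Open Scope classical_set_scope.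
Local Open Scope quotient_scope.

Definition Cplx (R : realType) : Type := R[i].
HB.instance Definition _ (R : realType) := Num.ClosedField.on (Cplx R).
HB.instance Definition _ (R : realType) :=
  PseudoPointedMetric.copy (Cplx R) (R[i])^o.

Section PropQuot.
Variables (T : choiceType) (r : T -> T -> Prop).
Hypotheses (r1 : forall x, r x x) (r2 : forall x y, r x y -> r y x)
           (r3 : forall x y z, r x y -> r y z -> r x z).

Definition brel : rel T := fun x y => `[< r x y >].

Lemma brel_refl : reflexive brel.
Proof. by move=> x; apply/asboolP. Qed.

Lemma brel_sym : symmetric brel.
Proof.
by move=> x y; apply/asboolP/asboolP => /r2.
Qed.

Lemma brel_trans : transitive brel.
Proof.
by move=> y x z /asboolP hxy /asboolP hyz; apply/asboolP; apply: r3 hyz.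
Qed.

Definition brel_equiv : equiv_rel T := EquivRel brel brel_refl brel_sym brel_trans.
End PropQuot.

Section SymPow.
Variables (R : realType) (n : nat).
Local Notation C := (Cplx R).

Definition permrel (z w : 'rV[C]_n) : Prop :=
  exists s : 'S_n, w = \row_i z 0 (s i).

Lemma permrel_refl z : permrel z z.
Proof. by exists 1%g; apply/matrixP => i j; rewrite !mxE perm1 ord1. Qed.

Lemma permrel_sym z w : permrel z w -> permrel w z.
Proof.
move=> [s ->]; exists (s^-1)%g; apply/matrixP => i j.
by rewrite !mxE permKV ord1.
Qed.

Lemma permrel_trans z w v : permrel z w -> permrel w v -> permrel z v.
Proof.
move=> [s ->] [t ->]; exists (t * s)%g; apply/matrixP => i j.
by rewrite !mxE permM.
Qed.

Definition permeq := brel_equiv permrel_refl permrel_sym permrel_trans.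

Definition SP : topologicalType := quotient_topology {eq_quot permeq}.

Definition piSP (z : 'rV[C]_n) : SP := \pi_({eq_quot permeq}) z.

Definition SPdiag : set SP := [set p | exists c : C, p = piSP (const_mx c)].

Definition SPo : topologicalType := set_type (~` SPdiag).

Definition affrow (l m : C) (z : 'rV[C]_n) : 'rV[C]_n := l *: z + const_mx m.

Definition actSP (l m : C) (p : SP) : SP := piSP (affrow l m (repr p)).

Lemma piSP_eq z w : piSP z = piSP w <-> permrel z w.
Proof.
split => h.
  by move/eqquotP: h => /asboolP.
by apply/eqquotP; apply/asboolP.
Qed.

Lemma actSP_pi l m z : actSP l m (piSP z) = piSP (affrow l m z).
Proof.
rewrite /actSP; apply/piSP_eq.
have : piSP (repr (piSP z)) = piSP z by rewrite /piSP reprK.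
move: (repr (piSP z)) => r /piSP_eq [s ->]; exists s.
by apply/matrixP => i j; rewrite !mxE.
Qed.

Lemma piSP_surj (p : SP) : exists z, p = piSP z.
Proof. by exists (repr p); rewrite /piSP reprK. Qed.

Definition orbrel (p q : SPo) : Prop :=
  exists l m : C, l != 0 /\ val q = actSP l m (val p).

Lemma orbrel_refl p : orbrel p p.
Proof.
exists 1, 0; split; first exact: oner_neq0.
have [z hz] := piSP_surj (val p); rewrite hz actSP_pi; congr piSP.
by apply/matrixP => i j; rewrite !mxE; ring.
Qed.

Lemma orbrel_sym p q : orbrel p q -> orbrel q p.
Proof.
move=> [l [m [l0 h]]]; exists l^-1, (- m / l); split; first by rewrite invr_eq0.
have [z hz] := piSP_surj (val p); rewrite h hz !actSP_pi; congr piSP.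
by apply/matrixP => i j; rewrite !mxE; field.
Qed.

Lemma orbrel_trans p q r : orbrel p q -> orbrel q r -> orbrel p r.
Proof.
move=> [l [m [l0 h]]] [l' [m' [l0' h']]]; exists (l' * l), (l' * m + m').
split; first by rewrite mulf_neq0.
have [z hz] := piSP_surj (val p); rewrite h' h hz !actSP_pi; congr piSP.
by apply/matrixP => i j; rewrite !mxE; ring.
Qed.

Definition orbeq := brel_equiv orbrel_refl orbrel_sym orbrel_trans.

Definition ConfQuot : topologicalType := quotient_topology {eq_quot orbeq}.

Definition piConf (p : SPo) : ConfQuot := \pi_({eq_quot orbeq}) p.

Definition baryc (z : 'rV[C]_n) : C := (\sum_i z 0 i) / n%:R.

Definition centred_poly (z : 'rV[C]_n) : {poly C} :=
  \prod_(i < n) ('X - (z 0 i - baryc z)%:P).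

Definition coeffs_a (z : 'rV[C]_n) : 'rV[C]_(n.-1) :=
  \row_(k < n.-1) (centred_poly z)`_k.

End SymPow.

(* Weighted projective space P(n, n-1, ..., 2): coordinate a_k (k < n-1) *)
(* has weight n - k.                                                    *)
Section WProj.
Variables (R : realType) (n : nat).
Local Notation C := (Cplx R).

Definition wact (t : C) (a : 'rV[C]_(n.-1)) : 'rV[C]_(n.-1) :=
  \row_(k < n.-1) (t ^+ (n - k) * a 0 k).

Definition Cm0 : topologicalType := set_type (~` [set (0 : 'rV[C]_(n.-1))]).

Definition wrel (a b : Cm0) : Prop := exists t : C, t != 0 /\ val b = wact t (val a).

Lemma wrel_refl a : wrel a a.
Proof.
exists 1; split; first exact: oner_neq0.
by apply/matrixP => i j; rewrite !mxE ord1 expr1n mul1r.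
Qed.

Lemma wrel_sym a b : wrel a b -> wrel b a.
Proof.
move=> [t [t0 h]]; exists t^-1; split; first by rewrite invr_eq0.
rewrite h; apply/matrixP => i j; rewrite !mxE ord1 exprVn mulrA mulVf ?mul1r //.
exact: expf_neq0.
Qed.

Lemma wrel_trans a b c : wrel a b -> wrel b c -> wrel a c.
Proof.
move=> [t [t0 h]] [u [u0 h']]; exists (u * t); split; first by rewrite mulf_neq0.
rewrite h' h; by apply/matrixP => i j; rewrite !mxE exprMn mulrA.
Qed.

Definition weq := brel_equiv wrel_refl wrel_sym wrel_trans.

Definition WP : topologicalType := quotient_topology {eq_quot weq}.

Definition piWP (a : Cm0) : WP := \pi_({eq_quot weq}) a.

End WProj.

Definition is_homeomorphism (X Y : topologicalType) (f : X -> Y) : Prop :=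
  continuous f /\ exists g : Y -> X, [/\ continuous g, cancel f g & cancel g f].

From HB Require Import structures.
From mathcomp Require Import all_boot all_order all_algebra perm.
From mathcomp Require Import generic_quotient complex.
From mathcomp Require Import all_classical all_reals all_analysis.
From mathcomp Require Import ring zify lra.
Import GRing.Theory Num.Theory numFieldTopology.Exports.
Import Order.TTheory.
Local Open Scope ring_scope.
Local Open Scope classical_set_scope.
Set Implicit Arguments.
Unset Strict Implicit.
Unset Printing Implicit Defensive.

(* Everything is read off the centred polynomial.  Its coefficients a_k are
   invariant under permutations and translations and pick up the factor
   lambda^(n-k) under z |-> lambda z, so psi is well defined; they all vanish
   exactly when the configuration is a single point.  Conversely a nonzero
   (a_0, ..., a_(n-2)) is the coefficient vector of the depressed polynomial
   X^n + a_(n-2) X^(n-2) + ... + a_0, whose roots form a configuration with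
   barycentre 0 in the preimage; this gives the inverse.  Both directions are
   continuous: coefficients are polynomial in the roots, and the roots of a
   monic polynomial depend continuously on its coefficients (proved by
   induction on the degree, splitting off a root close to a given one). *)

Lemma size_monicB (K : nzRingType) (p q : {poly K}) N : p \is monic -> q \is monic ->
  size p = N.+1 -> size q = N.+1 -> (size (p - q)%R <= N)%N.
Proof.
move=> mp mq sp sq; apply/leq_sizeP => j hj; rewrite coefB.
case: (ltngtP j N) => [jN|Nj|->].
- by rewrite ltnNge hj in jN.
- by rewrite !nth_default ?sp ?sq ?subrr.
- by rewrite -[N]/(N.+1.-1) -{1}sp -sq -!lead_coefE (monicP mp) (monicP mq) subrr.
Qed.

Section RootPoly.
Variable K : comNzRingType.

Lemma size_prod_XsubC_ord n (f : 'I_n -> K) : size (\prod_(i < n) ('X - (f i)%:P)) = n.+1.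
Proof. by rewrite size_prod_XsubC /index_enum unlock -enumT size_enum_ord. Qed.

Lemma coefMXsubC (p : {poly K}) c k :
  (p * ('X - c%:P))`_k = (if k is k'.+1 then p`_k' else 0) - p`_k * c.
Proof. by rewrite mulrBr coefB coefMX coefMC; case: k. Qed.

Lemma coef_prod_XsubC_scale n (f : 'I_n -> K) l k :
  (\prod_(i < n) ('X - (l * f i)%:P))`_k = l ^+ (n - k) * (\prod_(i < n) ('X - (f i)%:P))`_k.
Proof.
elim: n f k => [|n IH] f k; first by rewrite !big_ord0 sub0n expr0 mul1r.
rewrite !big_ord_recr /= !coefMXsubC; case: k => [|k]; first by rewrite !IH subn0 exprS; ring.
rewrite !IH subSS; case: (ltnP k n) => hk; first by rewrite -(subnSK hk) exprS; ring.
rewrite (nth_default _ (_ : size _ <= k.+1)%N) ?size_prod_XsubC_ord //.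
have [-> ->] : (n - k.+1 = 0)%N /\ (n - k = 0)%N by split; apply/eqP; rewrite subn_eq0 // ltnW.
by rewrite !expr0; ring.
Qed.

Definition root_poly n (z : 'rV[K]_n) : {poly K} := \prod_(i < n) ('X - (z 0 i)%:P).

Lemma size_root_poly n (z : 'rV[K]_n) : size (root_poly z) = n.+1.
Proof. exact: size_prod_XsubC_ord. Qed.

Lemma monic_root_poly n (z : 'rV[K]_n) : root_poly z \is monic.
Proof. exact: monic_prod_XsubC. Qed.

Lemma coef_root_poly_scale n l (z : 'rV[K]_n) k :
  (root_poly (l *: z))`_k = l ^+ (n - k) * (root_poly z)`_k.
Proof. by rewrite /root_poly -coef_prod_XsubC_scale; under eq_bigr do rewrite mxE. Qed.

Lemma root_polyE n (z : 'rV[K]_n) :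
  root_poly z = \prod_(x <- [tuple z 0 i | i < n]) ('X - x%:P).
Proof. by rewrite /root_poly /= big_map /index_enum unlock -enumT. Qed.

Lemma coef_root_poly_pred n (z : 'rV[K]_n.+1) : (root_poly z)`_n = - \sum_i z 0 i.
Proof.
rewrite root_polyE; have := @coefPn_prod_XsubC _ [tuple z 0 i | i < n.+1].
by rewrite size_tuple /= => ->//; rewrite big_map big_enum.
Qed.

End RootPoly.

Section Centring.
Variable R : realType.
Local Notation C := (Cplx R).

Lemma root_polyP n (z w : 'rV[C]_n) : root_poly z = root_poly w <-> permrel z w.
Proof.
split=> [|[s ->]].
  rewrite !root_polyE => /prod_XsubC_eq; rewrite perm_sym => /tuple_permP [s hs].
  exists s; apply/matrixP => i j; rewrite ord1 mxE.
  by have := congr1 (fun t => tnth t j) (val_inj hs); rewrite !tnth_mktuple.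
rewrite /root_poly [LHS](reindex_inj (@perm_inj _ s)) /=.
by apply: eq_bigr => i _; rewrite mxE.
Qed.

Lemma sum_permrel n (z w : 'rV[C]_n) : permrel z w -> \sum_i w 0 i = \sum_i z 0 i.
Proof.
case=> s ->; rewrite [RHS](reindex_inj (@perm_inj _ s)) /=.
by apply: eq_bigr => i _; rewrite mxE.
Qed.

Lemma baryc_permrel n (z w : 'rV[C]_n) : permrel z w -> baryc w = baryc z.
Proof. by move=> h; rewrite /baryc (sum_permrel h). Qed.

Lemma baryc_affrow n l m (z : 'rV[C]_n) : (0 < n)%N ->
  baryc (affrow l m z) = l * baryc z + m.
Proof.
move=> n_gt0; rewrite /baryc; under eq_bigr do rewrite !mxE.
rewrite big_split /= -mulr_sumr sumr_const card_ord -[_ *+ n]mulr_natr mulrDl -mulrA mulfK //.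
by rewrite pnatr_eq0 -lt0n.
Qed.

Definition centred_row n (z : 'rV[C]_n) : 'rV[C]_n := \row_i (z 0 i - baryc z).

Lemma centred_polyE n (z : 'rV[C]_n) : centred_poly z = root_poly (centred_row z).
Proof. by apply: eq_bigr => i _; rewrite mxE. Qed.

Lemma centred_row_affrow1 n (z : 'rV[C]_n) : centred_row z = affrow 1 (- baryc z) z.
Proof. by apply/matrixP => i j; rewrite !mxE mul1r ord1. Qed.

Lemma sum_centred_row n (z : 'rV[C]_n) : (0 < n)%N -> \sum_i centred_row z 0 i = 0.
Proof.
move=> n_gt0; under eq_bigr do rewrite mxE.
rewrite sumrB sumr_const card_ord /baryc -[_ *+ n]mulr_natr divfK ?subrr //.
by rewrite pnatr_eq0 -lt0n.
Qed.

Lemma centred_row_permrel n (z w : 'rV[C]_n) :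
  permrel z w -> permrel (centred_row z) (centred_row w).
Proof.
move=> zw; have := baryc_permrel zw; case: zw => s -> bzw; exists s.
by apply/matrixP => i j; rewrite !mxE bzw.
Qed.

Lemma centred_row_affrow n l m (z : 'rV[C]_n) : (0 < n)%N ->
  centred_row (affrow l m z) = l *: centred_row z.
Proof. by move=> n_gt0; apply/matrixP => i j; rewrite !mxE baryc_affrow //; ring. Qed.

Lemma coeffs_a_permrel n (z w : 'rV[C]_n) : permrel z w -> coeffs_a w = coeffs_a z.
Proof.
move=> /centred_row_permrel /root_polyP zw.
by apply/matrixP => i j; rewrite !mxE !centred_polyE zw.
Qed.

Lemma coeffs_a_affrow n l m (z : 'rV[C]_n) : (0 < n)%N ->
  coeffs_a (affrow l m z) = wact l (coeffs_a z).
Proof.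
move=> n_gt0; apply/matrixP => i j.
by rewrite !mxE !centred_polyE centred_row_affrow // coef_root_poly_scale.
Qed.

End Centring.

Section DepressedPoly.
Variables (R : realType) (m : nat).
Local Notation C := (Cplx R).
Local Notation n := m.+2.

Definition depressed_poly (a : 'rV[C]_m.+1) : {poly C} :=
  'X^n + \poly_(k < m.+1) a 0 (inord k).

Lemma coef_depressed_poly_lt a (k : 'I_m.+1) : (depressed_poly a)`_k = a 0 k.
Proof.
rewrite coefD coefXn coef_poly ltn_ord inord_val.
by rewrite (_ : (k == n :> nat) = false) ?add0r //; apply/negbTE; rewrite neq_ltn ltnS ltnW.
Qed.

Lemma coef_depressed_poly_ge a j : (m.+1 <= j)%N -> (depressed_poly a)`_j = (j == n)%:R.
Proof. by move=> hj; rewrite coefD coefXn coef_poly ltnNge hj addr0. Qed.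

Lemma size_depressed_poly a : size (depressed_poly a) = n.+1.
Proof.
rewrite size_polyDl size_polyXn //.
by apply: leq_ltn_trans (size_poly _ _) _.
Qed.

Lemma monic_depressed_poly a : depressed_poly a \is monic.
Proof.
rewrite monicE lead_coefDl ?lead_coefXn // size_polyXn.
by apply: leq_ltn_trans (size_poly _ _) _.
Qed.

Lemma coef_depressed_poly_wact t a k :
  (depressed_poly (@wact R n t a))`_k = t ^+ (n - k) * (depressed_poly a)`_k.
Proof.
case: (ltnP k m.+1) => hk; first by rewrite !(coef_depressed_poly_lt _ (Ordinal hk)) mxE.
rewrite !coef_depressed_poly_ge //; case: eqP => [->|_]; last by rewrite mulr0.
by rewrite subnn expr0 mulr1.
Qed.

Lemma coef_depressed_polyB a b k : (depressed_poly a - depressed_poly b)`_k =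
  if (k < m.+1)%N then a 0 (inord k) - b 0 (inord k) else 0.
Proof. by rewrite coefB !coefD !coef_poly; case: ifP => _; ring. Qed.

Lemma depressed_poly_coefs (P : {poly C}) : P \is monic -> size P = n.+1 -> P`_m.+1 = 0 ->
  P = depressed_poly (\row_(k < m.+1) P`_k).
Proof.
move=> mP sP Pm; apply/polyP => j; case: (ltnP j m.+1) => hj.
  by rewrite (coef_depressed_poly_lt _ (Ordinal hj)) mxE.
rewrite coef_depressed_poly_ge //; case: (ltngtP j n) => hjn.
- by rewrite (_ : j = m.+1) ?Pm //; lia.
- by rewrite nth_default ?sP.
- by rewrite hjn -(monicP mP) lead_coefE sP.
Qed.

Lemma centred_poly_depressed (z : 'rV[C]_n) : centred_poly z = depressed_poly (coeffs_a z).
Proof.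
rewrite centred_polyE {1}(@depressed_poly_coefs (root_poly (centred_row z))).
- by congr depressed_poly; apply/matrixP => i j; rewrite !mxE centred_polyE.
- exact: monic_root_poly.
- exact: size_root_poly.
- by rewrite coef_root_poly_pred sum_centred_row ?oppr0.
Qed.

Lemma coeffs_a_eq0 (z : 'rV[C]_n) : coeffs_a z = 0 -> z = const_mx (baryc z).
Proof.
move=> a0; have Xn : root_poly (centred_row z) = 'X^n.
  rewrite -centred_polyE centred_poly_depressed a0; apply/polyP => j.
  case: (ltnP j m.+1) => hj; last by rewrite coef_depressed_poly_ge // coefXn.
  by rewrite (coef_depressed_poly_lt _ (Ordinal hj)) mxE coefXn (_ : (j == n) = false) //; lia.
apply/matrixP => i j; rewrite ord1 mxE.
have : (root_poly (centred_row z)).[centred_row z 0 j] = 0.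
  by rewrite horner_prod (bigD1 j) //= hornerXsubC subrr mul0r.
by rewrite Xn hornerXn => /eqP; rewrite expf_eq0 /= mxE subr_eq0 => /eqP.
Qed.

Definition depressed_roots (a : 'rV[C]_m.+1) : 'rV[C]_n :=
  \row_(i < n) (sval (closed_field_poly_normal (depressed_poly a)))`_i.

Lemma root_poly_depressed_roots a : root_poly (depressed_roots a) = depressed_poly a.
Proof.
rewrite /depressed_roots; case: closed_field_poly_normal => r /=.
rewrite (monicP (monic_depressed_poly a)) scale1r => ar.
have sr : size r = n.
  have := congr1 (fun p : {poly C} => size p) ar.
  by rewrite size_depressed_poly size_prod_XsubC => -[].
rewrite ar root_polyE; congr (\prod_(x <- _) _).
rewrite /= -[RHS](mkseq_nth 0) sr /mkseq -val_enum_ord -map_comp.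
by apply: eq_map => i /=; rewrite mxE.
Qed.

Lemma baryc_depressed_roots a : baryc (depressed_roots a) = 0.
Proof.
have := coef_root_poly_pred (depressed_roots a).
rewrite root_poly_depressed_roots coef_depressed_poly_ge // (_ : (m.+1 == n) = false); last by lia.
by move/eqP; rewrite eq_sym oppr_eq0 /baryc => /eqP ->; rewrite mul0r.
Qed.

Lemma coeffs_a_depressed_roots a : coeffs_a (depressed_roots a) = a.
Proof.
have centred : centred_row (depressed_roots a) = depressed_roots a.
  by apply/matrixP => i j; rewrite mxE baryc_depressed_roots subr0 ord1.
apply/matrixP => i j; rewrite ord1 mxE centred_polyE centred.
by rewrite root_poly_depressed_roots coef_depressed_poly_lt.
Qed.

Lemma coeffs_a_const (c : C) : coeffs_a (const_mx c : 'rV[C]_n) = 0.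
Proof.
have -> : const_mx c = affrow 0 c (0 : 'rV[C]_n) by rewrite /affrow scale0r add0r.
rewrite coeffs_a_affrow //; apply/matrixP => i j.
have jn : (j < n)%N by exact: ltnW (ltn_ord j).
by rewrite !mxE expr0n subn_eq0 leqNgt jn mul0r.
Qed.

Lemma depressed_roots_nondiag a :
  a \in ~` [set 0] -> piSP (depressed_roots a) \in ~` @SPdiag R n.
Proof.
move=> /set_mem /eqP a_neq0; apply/mem_set => -[c /piSP_eq /permrel_sym /coeffs_a_permrel].
by rewrite coeffs_a_const coeffs_a_depressed_roots => /eqP; apply/negP.
Qed.

Lemma depressed_roots_wact t a :
  permrel (t *: depressed_roots a) (depressed_roots (@wact R n t a)).
Proof.
apply/root_polyP/polyP => k.
by rewrite coef_root_poly_scale !root_poly_depressed_roots coef_depressed_poly_wact.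
Qed.

Lemma centred_row_depressed_roots (z : 'rV[C]_n) :
  permrel (centred_row z) (depressed_roots (coeffs_a z)).
Proof.
by apply/root_polyP; rewrite root_poly_depressed_roots -centred_poly_depressed centred_polyE.
Qed.

End DepressedPoly.

Section Quotients.
Variables (R : realType) (m : nat).
Local Notation C := (Cplx R).
Local Notation n := m.+2.

Lemma piWP_eq (a b : Cm0 R n) : piWP a = piWP b <-> wrel a b.
Proof. by split=> [/eqquotP/asboolP | ab]; last by apply/eqquotP/asboolP. Qed.

Lemma piConf_eq (p q : SPo R n) : piConf p = piConf q <-> orbrel p q.
Proof. by split=> [/eqquotP/asboolP | pq]; last by apply/eqquotP/asboolP. Qed.

Lemma reprSPK (x : SP R n) : piSP (repr x) = x.
Proof. exact: reprK. Qed.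

Lemma coeffs_a_nondiag (z : 'rV[C]_n) :
  piSP z \in ~` @SPdiag R n -> coeffs_a z \in ~` [set 0].
Proof.
move=> /set_mem zD; apply/mem_set => /coeffs_a_eq0 zc; apply: zD.
by exists (baryc z); rewrite {1}zc.
Qed.

Definition coeffsSP (x : SP R n) : 'rV[C]_m.+1 := coeffs_a (repr x).

Lemma coeffsSP_pi z : coeffsSP (piSP z) = coeffs_a z.
Proof.
have /piSP_eq zr : piSP (repr (piSP z)) = piSP z by rewrite reprSPK.
exact: coeffs_a_permrel (permrel_sym zr).
Qed.

Lemma coeffsSP_nondiag (p : SPo R n) : coeffsSP (val p) \in ~` [set 0].
Proof. by apply: coeffs_a_nondiag; rewrite reprSPK; apply: valP. Qed.

Definition coeff_class (p : SPo R n) : WP R n :=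
  @piWP R n (exist _ (coeffsSP (val p)) (coeffsSP_nondiag p)).

Lemma coeff_class_pi z hz ha :
  coeff_class (exist _ (piSP z) hz) = piWP (exist _ (coeffs_a z) ha).
Proof. by congr piWP; apply: val_inj; exact: coeffsSP_pi. Qed.

Lemma coeff_class_orbrel p q : orbrel p q -> coeff_class p = coeff_class q.
Proof.
move=> [l [c [l_neq0 pq]]]; apply/piWP_eq; exists l; split=> //=.
move: pq => /= ->; have [z ->] := piSP_surj (sval p).
by rewrite actSP_pi !coeffsSP_pi coeffs_a_affrow.
Qed.

Definition psi (x : ConfQuot R n) : WP R n := coeff_class (repr x).

Lemma psi_pi p : psi (piConf p) = coeff_class p.
Proof. by apply: coeff_class_orbrel; apply/piConf_eq; rewrite /piConf reprK. Qed.

Definition rootsSP (a : 'rV[C]_m.+1) : SP R n := piSP (depressed_roots a).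

Definition root_class (a : Cm0 R n) : ConfQuot R n :=
  @piConf R n (exist _ (rootsSP (val a)) (depressed_roots_nondiag (valP a))).

Lemma root_class_wrel a b : wrel a b -> root_class a = root_class b.
Proof.
move=> [t [t_neq0 ab]]; apply/piConf_eq; exists t, 0; split=> //=.
set x := depressed_roots (sval a); rewrite /rootsSP -/x actSP_pi; apply/piSP_eq/permrel_sym.
have -> : affrow t 0 x = t *: x by apply/matrixP => i j; rewrite !mxE addr0.
by move: ab => /= ->; exact: depressed_roots_wact.
Qed.

Definition psi_inv (w : WP R n) : ConfQuot R n := root_class (repr w).

Lemma psi_inv_pi a : psi_inv (piWP a) = root_class a.
Proof. by apply: root_class_wrel; apply/piWP_eq; rewrite /piWP reprK. Qed.

Lemma psiK : cancel psi psi_inv.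
Proof.
move=> x; rewrite -[x](reprK x) -/(piConf _) psi_pi psi_inv_pi.
set p := repr x; have [z pz] := piSP_surj (sval p).
apply/piConf_eq/orbrel_sym; exists 1, (- baryc z); split=> [|/=]; first exact: oner_neq0.
rewrite pz coeffsSP_pi actSP_pi -centred_row_affrow1; apply/piSP_eq.
exact: permrel_sym (centred_row_depressed_roots _).
Qed.

Lemma psi_invK : cancel psi_inv psi.
Proof.
move=> w; rewrite -[w](reprK w) -/(piWP _) psi_inv_pi psi_pi.
case: (repr w) => a a_neq0 /=; rewrite /root_class.
rewrite (coeff_class_pi _ (coeffs_a_nondiag (depressed_roots_nondiag a_neq0))).
by apply: f_equal; apply: val_inj; exact: coeffs_a_depressed_roots.
Qed.

End Quotients.

Section ComplexModulus.
Variable R : rcfType.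
Local Notation C := R[i].
Local Open Scope complex_scope.

(* The modulus as an element of the ordered field R (R[i] is only partially
   ordered), so that the estimates below can be carried out in R. *)
Definition cnorm (z : C) : R := complex.Re `|z|.

Lemma cnormE (z : C) : `|z| = (cnorm z)%:C.
Proof. by rewrite /cnorm normc_def. Qed.

Lemma cnorm_ge0 z : 0 <= cnorm z.
Proof. by rewrite -ler0c -cnormE normr_ge0. Qed.

Lemma ler_cnormD x y : cnorm (x + y) <= cnorm x + cnorm y.
Proof. by rewrite -lecR rmorphD /= -!cnormE ler_normD. Qed.

Lemma cnormM x y : cnorm (x * y) = cnorm x * cnorm y.
Proof. by apply: (@complexI R); rewrite rmorphM /= -!cnormE normrM. Qed.

Lemma cnormN x : cnorm (- x) = cnorm x.
Proof. by apply: (@complexI R); rewrite -!cnormE normrN. Qed.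

Lemma cnorm_distC x y : cnorm (x - y) = cnorm (y - x).
Proof. by apply: (@complexI R); rewrite -!cnormE distrC. Qed.

Lemma cnormX x k : cnorm (x ^+ k) = cnorm x ^+ k.
Proof. by apply: (@complexI R); rewrite rmorphXn /= -!cnormE normrX. Qed.

Lemma cnorm0 : cnorm 0 = 0.
Proof. by apply: (@complexI R); rewrite -!cnormE normr0. Qed.

Lemma ler_cnorm_sum I (r : seq I) (F : I -> C) :
  cnorm (\sum_(i <- r) F i) <= \sum_(i <- r) cnorm (F i).
Proof.
rewrite -lecR rmorph_sum /= -cnormE.
under [X in _ <= X]eq_bigr do rewrite -cnormE.
exact: ler_norm_sum.
Qed.

Lemma cnorm_prod I (r : seq I) (F : I -> C) :
  cnorm (\prod_(i <- r) F i) = \prod_(i <- r) cnorm (F i).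
Proof.
apply: (@complexI R); rewrite rmorph_prod /= -cnormE.
under [X in _ = X]eq_bigr do rewrite -cnormE.
exact: normr_prod.
Qed.

Lemma cnorm_ltE x (r : R) : (`|x| < r%:C) = (cnorm x < r).
Proof. by rewrite cnormE ltcR. Qed.

Lemma cnorm_horner_le (p : {poly C}) x N : (size p <= N)%N ->
  cnorm p.[x] <= \sum_(k < N) cnorm p`_k * cnorm x ^+ k.
Proof.
move=> sp; rewrite (horner_coef_wide _ sp); apply: le_trans (ler_cnorm_sum _ _) _.
by apply: ler_sum => k _; rewrite cnormM cnormX.
Qed.

End ComplexModulus.

Lemma tolerances_exist (R : realFieldType) m (eps d' L B K : R) :
  0 < eps -> 0 < d' -> 0 < L -> 0 <= B -> 0 <= K ->
  exists eta delta, [/\ 0 < eta <= 1, eta <= eps, 0 < delta,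
    delta * K < eta ^+ m & L * (delta + eta * B) < d'].
Proof.
move=> eps_gt0 d'_gt0 L_gt0 B_ge0 K_ge0.
have LB_gt0 : 0 < 2 * L * (B + 1) by apply: mulr_gt0; lra.
pose eta := Num.min 1 (Num.min eps (d' / (2 * L * (B + 1)))).
have eta_gt0 : 0 < eta by rewrite !lt_min ltr01 eps_gt0 divr_gt0.
pose delta := Num.min (d' / (2 * L)) (eta ^+ m / (K + 1)).
have delta_gt0 : 0 < delta by rewrite lt_min !divr_gt0 ?exprn_gt0 //; lra.
exists eta, delta; split=> //; first by rewrite eta_gt0 ge_min lexx.
- by rewrite !ge_min lexx orbT.
- apply: (@lt_le_trans _ _ (delta * (K + 1))); first by rewrite ltr_pM2l // ltrDl.
  by rewrite -ler_pdivlMr ?ge_min ?lexx ?orbT //; lra.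
have h1 : delta * (2 * L) <= d' by rewrite -ler_pdivlMr ?ge_min ?lexx //; lra.
have h2 : eta * (2 * L * (B + 1)) <= d' by rewrite -ler_pdivlMr // !ge_min lexx !orbT.
have : 0 < L * eta by rewrite mulr_gt0.
nra.
Qed.

Section RootApproximation.
Variable R : rcfType.
Local Notation C := R[i].

Lemma exists_root_near (r : seq C) x e : 0 <= e ->
  cnorm (\prod_(y <- r) ('X - y%:P)).[x] < e ^+ size r ->
  exists2 s, s \in r & cnorm (x - s) < e.
Proof.
move=> e_ge0 small; apply/hasP; apply: contrapT => /negP /hasPn far.
move: small; apply/negP; rewrite -leNgt horner_prod cnorm_prod.
rewrite -[X in X <= _]mulr1 -iter_mulr -count_predT -big_const_seq.
rewrite big_seq [X in _ <= X]big_seq.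
by apply: ler_prod => y yr; rewrite e_ge0 hornerXsubC leNgt far.
Qed.

Lemma cnorm_coef_le_sum (p : {poly C}) N k : (size p <= N)%N ->
  cnorm p`_k <= \sum_(i < N) cnorm p`_i.
Proof.
move=> sp; case: (ltnP k N) => [kN|Nk].
  by rewrite (bigD1 (Ordinal kN)) //= lerDl; apply: sumr_ge0 => i _; apply: cnorm_ge0.
rewrite nth_default ?(leq_trans sp) // cnorm0.
by apply: sumr_ge0 => i _; apply: cnorm_ge0.
Qed.

Lemma cofactor_coef_bound (D : {poly C}) x m e M : (size D <= m)%N ->
  (forall k, cnorm (D * ('X - x%:P))`_k <= e) -> cnorm x <= M -> 1 <= M -> 0 <= e ->
  forall k, cnorm D`_k <= m%:R * e * M ^+ m.
Proof.
move=> /leq_sizeP D_hi De xM M_ge1 e_ge0.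
suff bound j k : (m <= k + j)%N -> cnorm D`_k <= j%:R * e * M ^+ j.
  by move=> k; apply: bound; apply: leq_addl.
elim: j k => [|j IHj] k hk; first by rewrite addn0 in hk; rewrite D_hi // cnorm0 !mul0r.
have Mj : 1 <= M ^+ j by exact: exprn_ege1.
have Mj1 : 1 <= M ^+ j.+1 by exact: exprn_ege1.
have -> : j.+1%:R * e * M ^+ j.+1 = (j%:R * e * M ^+ j) * M + e * M ^+ j.+1.
  by rewrite -natr1 exprSr; ring.
have a_ge0 : 0 <= j%:R * e * M ^+ j by rewrite !mulr_ge0 // (le_trans ler01 Mj).
move: a_ge0 Mj1; set a := j%:R * e * M ^+ j; set u := M ^+ j.+1 => a_ge0 u_ge1.
case: (leqP m (k + j)) => h; first by apply: le_trans (IHj k h) _; rewrite -/a; nra.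
have Dk : D`_k = (D * ('X - x%:P))`_k.+1 + D`_k.+1 * x by rewrite coefMXsubC; ring.
have Dk1 : cnorm D`_k.+1 <= a by rewrite /a; apply: IHj; rewrite addSnnS.
rewrite Dk; apply: le_trans (ler_cnormD _ _) _; rewrite cnormM.
have := De k.+1; have := cnorm_ge0 x; have := cnorm_ge0 D`_k.+1; nra.
Qed.

Lemma cofactor_near (Q P : {poly C}) s rho m delta eta :
  Q \is monic -> P \is monic -> size Q = m.+1 -> size P = m.+1 ->
  (forall k, cnorm (Q * ('X - s%:P) - P * ('X - rho%:P))`_k <= delta) ->
  cnorm (rho - s) <= eta -> eta <= 1 -> 0 <= delta ->
  forall k, cnorm (Q - P)`_k <=
    m.+1%:R * (cnorm rho + 1) ^+ m * (delta + eta * \sum_(i < m.+1) cnorm P`_i).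
Proof.
move=> mQ mP sQ sP close rho_s eta_le1 delta_ge0 k.
set B := \sum_(i < m.+1) _; set M := cnorm rho + 1.
have eta_ge0 : 0 <= eta := le_trans (cnorm_ge0 _) rho_s.
have B_ge0 : 0 <= B by apply: sumr_ge0 => i _; apply: cnorm_ge0.
have e_ge0 : 0 <= delta + eta * B by rewrite addr_ge0 ?mulr_ge0.
have M_ge1 : 1 <= M by rewrite lerDr cnorm_ge0.
have s_le : cnorm s <= M.
  have := ler_cnormD (s - rho) rho; rewrite subrK cnorm_distC /M => h; lra.
have DE k' : cnorm ((Q - P) * ('X - s%:P))`_k' <= delta + eta * B.
  have -> : (Q - P) * ('X - s%:P) = Q * ('X - s%:P) - P * ('X - rho%:P) - (rho - s)%:P * P.
    by rewrite polyCB; ring.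
  rewrite coefB coefCM; apply: le_trans (ler_cnormD _ _) _; rewrite cnormN cnormM.
  apply: lerD => //; apply: ler_pM => //; try apply: cnorm_ge0.
  by apply: cnorm_coef_le_sum; rewrite sP.
apply: le_trans (cofactor_coef_bound (size_monicB mQ mP sQ sP) DE s_le M_ge1 e_ge0 k) _.
have M_ge0 : 0 <= M ^+ m by rewrite exprn_ge0 // (le_trans ler01 M_ge1).
by rewrite mulrAC; apply: ler_wpM2r => //; apply: ler_wpM2r => //; rewrite ler_nat.
Qed.

Lemma factor_near_root (Q P : {poly C}) rho m delta eta :
  Q \is monic -> size Q = m.+2 -> P \is monic -> size P = m.+1 -> 0 <= eta ->
  (forall k, cnorm (Q - P * ('X - rho%:P))`_k <= delta) ->
  delta * \sum_(k < m.+1) cnorm rho ^+ k < eta ^+ m.+1 ->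
  exists s Q', [/\ Q = Q' * ('X - s%:P), Q' \is monic, size Q' = m.+1 & cnorm (rho - s) < eta].
Proof.
move=> mQ sQ mP sP eta_ge0 close small.
have [r Qr] : {r | Q = \prod_(y <- r) ('X - y%:P)}.
  by case: (closed_field_poly_normal Q) => r; rewrite (monicP mQ) scale1r; exists r.
have sr : size r = m.+1.
  by have := congr1 (fun p : {poly C} => size p) Qr; rewrite sQ size_prod_XsubC => -[].
have mP0 : P * ('X - rho%:P) \is monic by rewrite monicMr ?monicXsubC.
have sP0 : size (P * ('X - rho%:P)) = m.+2.
  by rewrite size_Mmonic ?monic_neq0 ?monicXsubC // sP size_XsubC addn2.
have Qrho : cnorm Q.[rho] < eta ^+ size r.
  have -> : Q.[rho] = (Q - P * ('X - rho%:P)).[rho].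
    by rewrite hornerD hornerN hornerM hornerXsubC subrr mulr0 subr0.
  apply: le_lt_trans (cnorm_horner_le _ (size_monicB mQ mP0 sQ sP0)) _.
  rewrite sr; apply: le_lt_trans small; rewrite mulr_sumr; apply: ler_sum => k _.
  by apply: ler_wpM2r; [rewrite exprn_ge0 ?cnorm_ge0 | exact: close].
rewrite Qr in Qrho; have [s s_in rho_s] := exists_root_near eta_ge0 Qrho.
exists s, (\prod_(y <- rem s r) ('X - y%:P)); split=> //.
- by rewrite Qr (perm_big _ (perm_to_rem s_in)) big_cons mulrC.
- exact: monic_prod_XsubC.
- by rewrite size_prod_XsubC size_rem // sr.
Qed.

Lemma roots_near m (c : 'I_m -> C) eps : 0 < eps -> exists2 delta, 0 < delta &
  forall Q : {poly C}, Q \is monic -> size Q = m.+1 ->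
    (forall k, cnorm (Q - \prod_(i < m) ('X - (c i)%:P))`_k < delta) ->
  exists d : 'I_m -> C, Q = \prod_(i < m) ('X - (d i)%:P) /\ forall i, cnorm (d i - c i) < eps.
Proof.
elim: m c eps => [|m IH] c eps eps_gt0.
  exists 1 => // Q mQ sQ _; exists (fun _ => 0); split; last by case.
  rewrite big_ord0 (size1_polyC (eq_leq sQ)).
  by have := monicP mQ; rewrite lead_coefE sQ /= => ->.
set rho := c ord0; set P := \prod_(i < m) ('X - (c (lift ord0 i))%:P).
have P0E : \prod_(i < m.+1) ('X - (c i)%:P) = P * ('X - rho%:P) by rewrite big_ord_recl mulrC.
have mP : P \is monic by apply: monic_prod_XsubC.
have sP : size P = m.+1 by apply: size_prod_XsubC_ord.
have [d' d'_gt0 IHc] := IH (fun i => c (lift ord0 i)) eps eps_gt0.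
set B := \sum_(i < m.+1) cnorm P`_i; set K := \sum_(k < m.+1) cnorm rho ^+ k.
have B_ge0 : 0 <= B by apply: sumr_ge0 => i _; apply: cnorm_ge0.
have K_ge0 : 0 <= K by apply: sumr_ge0 => i _; rewrite exprn_ge0 ?cnorm_ge0.
have L_gt0 : 0 < m.+1%:R * (cnorm rho + 1) ^+ m.
  by rewrite mulr_gt0 ?ltr0Sn // exprn_gt0 // ltr_pwDr ?cnorm_ge0.
(* Split off a root s of Q within eta of rho; the cofactor of X - s is then
   d'-close to P, so the induction hypothesis applies to it. *)
have [eta [delta [/andP[eta_gt0 eta_le1] eta_le_eps delta_gt0 deltaK small]]] :=
  tolerances_exist m.+1 eps_gt0 d'_gt0 L_gt0 B_ge0 K_ge0.
exists delta => // Q mQ sQ; rewrite P0E => close.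
have [s [Q' [QE mQ' sQ' rho_s]]] :=
  factor_near_root mQ sQ mP sP (ltW eta_gt0) (fun k => ltW (close k)) deltaK.
have [d [Q'E d_near]] : exists d : 'I_m -> C,
    Q' = \prod_(i < m) ('X - (d i)%:P) /\ forall i, cnorm (d i - c (lift ord0 i)) < eps.
  apply: IHc => // k; apply: le_lt_trans small.
  apply: (cofactor_near mQ' mP sQ' sP _ (ltW rho_s) eta_le1 (ltW delta_gt0)) => k'.
  by rewrite -QE; exact/ltW/close.
exists (fun i => if unlift ord0 i is Some j then d j else s); split.
  rewrite QE Q'E big_ord_recl unlift_none mulrC; congr (_ * _).
  by apply: eq_bigr => j _; rewrite liftK.
move=> i; case: (unliftP ord0 i) => [j ->|->]; first exact: d_near.
by rewrite cnorm_distC; apply: lt_le_trans rho_s _.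
Qed.

End RootApproximation.

Lemma continuous_set_type (X Y : topologicalType) (A : set Y) (f : X -> Y)
    (fA : forall x, f x \in A) :
  continuous f -> continuous (fun x => exist _ (f x) (fA x) : set_type A).
Proof. by move=> cf; apply: continuous_comp_initial. Qed.

Lemma continuous_quotient_of (T Z : topologicalType) (Q0 : quotType T)
    (f : quotient_topology Q0 -> Z) (g : T -> Z) :
  (forall x, f (\pi_(quotient_topology Q0) x)%qT = g x) -> continuous g -> continuous f.
Proof. by move=> fg cg; apply/quotient_continuous; rewrite (_ : _ \o _ = g) //; apply: funext. Qed.

Section PolynomialContinuity.
Variable K : numFieldType.

Lemma continuous_addf (T : topologicalType) (f g : T -> K) :
  continuous f -> continuous g -> continuous (fun x => f x + g x).
Proof. by move=> cf cg x; exact: (@continuousD K K^o T f g x (cf x) (cg x)). Qed.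

Lemma continuous_mulf (T : topologicalType) (f g : T -> K) :
  continuous f -> continuous g -> continuous (fun x => f x * g x).
Proof. by move=> cf cg x; exact: (@continuousM K T f g x (cf x) (cg x)). Qed.

Lemma continuous_oppf (T : topologicalType) (f : T -> K) :
  continuous f -> continuous (fun x => - f x).
Proof. by move=> cf x; exact: (@continuousN K K^o T f x (cf x)). Qed.

Lemma continuous_sumf (T : topologicalType) n (f : 'I_n -> T -> K) :
  (forall i, continuous (f i)) -> continuous (fun x => \sum_(i < n) f i x).
Proof.
elim: n f => [|n IH] f cf; first by under eq_fun do rewrite big_ord0; exact: cst_continuous.
under eq_fun do rewrite big_ord_recr /=.
by apply: continuous_addf; [exact: (IH (fun i => f (widen_ord (leqnSn n) i))) | exact: cf].
Qed.

Lemma continuous_mx (T : topologicalType) p q (f : T -> 'M[K]_(p, q)) :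
  (forall i j, continuous (fun x => f x i j)) -> continuous f.
Proof.
move=> cf x A /nbhs_ballP [e e_gt0 eA].
pose P (ij : 'I_p * 'I_q) y := ball (f x ij.1 ij.2) e (f y ij.1 ij.2).
have Pij ij : nbhs x (P ij).
  have := cf ij.1 ij.2 x _ (@nbhsx_ballx _ K (f x ij.1 ij.2) e e_gt0).
  by rewrite nbhs_simpl.
have := @filter_forall T _ P (@nbhs T _ x) (nbhs_filter x) Pij.
by apply: filterS => y Py; apply: eA; split=> // i j; exact: (Py (i, j)).
Qed.

Lemma continuous_coef_prod_XsubC (T : topologicalType) n (f : 'I_n -> T -> K) k :
  (forall i, continuous (f i)) ->
  continuous (fun x => (\prod_(i < n) ('X - (f i x)%:P))`_k).
Proof.
elim: n f k => [|n IH] f k cf; first by under eq_fun do rewrite big_ord0; exact: cst_continuous.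
under eq_fun do rewrite big_ord_recr /= coefMXsubC.
have cf' := fun i => cf (widen_ord (leqnSn n) i).
apply: continuous_addf; first by case: k => [|k]; [exact: cst_continuous | exact: IH].
by apply/continuous_oppf/continuous_mulf; [exact: IH | exact: cf].
Qed.

End PolynomialContinuity.

Section CoefficientContinuity.
Variable R : realType.
Local Notation C := (Cplx R).

Lemma continuous_baryc n : continuous (fun z : 'rV[C]_n => baryc z).
Proof.
apply: continuous_mulf; last exact: cst_continuous.
by apply: continuous_sumf => i; exact: coord_continuous.
Qed.

Lemma continuous_coeffs_a n : continuous (fun z : 'rV[C]_n => coeffs_a z).
Proof.
apply: continuous_mx => i j; under eq_fun do rewrite mxE.
apply: (@continuous_coef_prod_XsubC _ 'rV[C]_n n (fun k z => z 0 k - baryc z) j) => k.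
by apply: continuous_addf; [exact: coord_continuous | exact/continuous_oppf/continuous_baryc].
Qed.

End CoefficientContinuity.

Section QuotientContinuity.
Variables (R : realType) (m : nat).
Local Notation C := (Cplx R).
Local Notation n := m.+2.

Lemma continuous_coeffsSP : continuous (@coeffsSP R m).
Proof. exact: continuous_quotient_of (@coeffsSP_pi R m) (@continuous_coeffs_a R n). Qed.

Lemma continuous_coeff_class : continuous (@coeff_class R m).
Proof.
move=> p; apply: (@continuous_comp _ _ _ _ (@piWP R n)); last exact: pi_continuous.
apply: continuous_set_type => {}p.
by apply: continuous_comp; [exact: initial_continuous | exact: continuous_coeffsSP].
Qed.

Lemma continuous_psi : continuous (@psi R m).
Proof. exact: continuous_quotient_of (@psi_pi R m) continuous_coeff_class. Qed.

Lemma continuous_rootsSP : continuous (@rootsSP R m).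
Proof.
move=> a0 O /= /(@pi_continuous _ {eq_quot permeq R n}%qT (depressed_roots a0)).
move=> /nbhs_ballP [e e_gt0 eO].
have /complex_realP [r er] := gtr0_real e_gt0.
have r_gt0 : 0 < r by move: e_gt0; rewrite /= er ltcE /= => /andP[].
have [delta delta_gt0 roots_close] := roots_near (fun i => depressed_roots a0 0 i) r_gt0.
apply: filterS (@nbhsx_ballx _ _ a0 delta%:C%C _) => [a a_near|]; last by rewrite ltcE /= eqxx.
have [d [ad d_near]] : exists d : 'I_n -> C,
    depressed_poly a = \prod_(i < n) ('X - (d i)%:P) /\
    forall i, cnorm (d i - depressed_roots a0 0 i) < r.
  apply: roots_close; rewrite ?monic_depressed_poly ?size_depressed_poly // => k.
  rewrite -/(root_poly _) root_poly_depressed_roots coef_depressed_polyB.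
  case: ifP => [km|_]; last by rewrite cnorm0.
  by rewrite cnorm_distC -cnorm_ltE; exact: (a_near.2 0 (inord k)).
rewrite /= /rootsSP; have /piSP_eq-> : permrel (depressed_roots a) (\row_i d i).
  by apply/root_polyP; rewrite root_poly_depressed_roots ad; apply: eq_bigr => i _; rewrite mxE.
apply: eO; split=> // i j; rewrite ord1 /ball /= mxE er cnorm_ltE cnorm_distC.
exact: d_near.
Qed.

Lemma continuous_root_class : continuous (@root_class R m).
Proof.
move=> a; apply: (@continuous_comp _ _ _ _ (@piConf R n)); last exact: pi_continuous.
apply: continuous_set_type => {}a.
by apply: continuous_comp; [exact: initial_continuous | exact: continuous_rootsSP].
Qed.

Lemma continuous_psi_inv : continuous (@psi_inv R m).
Proof. exact: continuous_quotient_of (@psi_inv_pi R m) continuous_root_class. Qed.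

End QuotientContinuity.

Theorem mainTheorem3 (R : realType) (n : nat) (hn : (2 <= n)%N) :
  (forall z : 'rV[Cplx R]_n,
      piSP z \in ~` @SPdiag R n -> coeffs_a z \in ~` [set 0]) /\
  exists psi : ConfQuot R n -> WP R n,
    (forall (z : 'rV[Cplx R]_n) (hz : piSP z \in ~` @SPdiag R n)
            (ha : coeffs_a z \in ~` [set 0]),
        psi (piConf (exist _ (piSP z) hz)) = piWP (exist _ (coeffs_a z) ha))
    /\ is_homeomorphism psi.
Proof.
case: n hn => [|[|m]] // _; split; first exact: coeffs_a_nondiag.
exists (@psi R m); split; first by move=> z hz ha; rewrite psi_pi coeff_class_pi.
split; first exact: continuous_psi.
by exists (@psi_inv R m); split; [exact: continuous_psi_inv | exact: psiK | exact: psi_invK].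
Qed.
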